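(* Let $F$ be a positive integer, $S\in\mathrm{Sat}(F)$, and $s\in S$ with $0<s<F$ such that $\mathrm{d}_S(s)\neq\mathrm{d}_S(s')$ for all $s'\in S$ with $0<s'<s$. If $X$ is a $\mathrm{Sat}(F)$-set with $\mathrm{Sat}(F)[X]=S$, then $s\in X$.
   Context: A numerical semigroup is a subset $S\subseteq\mathbb{N}$ closed under addition, containing $0$, with $\mathbb{N}\setminus S$ finite; its Frobenius number $\mathrm{F}(S)$ is the largest integer not in $S$. For $A\subseteq\mathbb{N}$ and $a\in A$, let $\mathrm{d}_A(a)=\gcd\{x\in A\mid x\le a\}$. A numerical semigroup $S$ is saturated if $s+\mathrm{d}_S(s)\in S$ for all $s\in S\setminus\{0\}$. For a positive integer $F$, $\mathrm{Sat}(F)$ denotes the set of all saturated numerical semigroups $S$ with $\mathrm{F}(S)=F$. Let $\Delta(F+1)=\{0\}\cup\{x\in\mathbb{N}\mid x\ge F+1\}$. A set $X\subseteq\mathbb{N}$ is a $\mathrm{Sat}(F)$-set if $X\cap\Delta(F+1)=\emptyset$ and there exists $S\in\mathrm{Sat}(F)$ with $X\subseteq S$. For a $\mathrm{Sat}(F)$-set $X$, $\mathrm{Sat}(F)[X]$ denotes the intersection of all elements of $\mathrm{Sat}(F)$ containing $X$ (it is the smallest element of $\mathrm{Sat}(F)$ containing $X$). *)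

(* Subsets of N are represented as boolean predicates
   [pred nat]; numerical semigroups (cofinite) and Sat(F)-sets (finite)
   are decidable, so this loses nothing. *)
From mathcomp Require Import all_boot.
Set Implicit Arguments. Unset Strict Implicit. Unset Printing Implicit Defensive.

Definition numerical_semigroup (S : pred nat) : Prop :=
  [/\ S 0,
      (forall x y, S x -> S y -> S (x + y)) &
      exists N, forall n, N <= n -> S n].

Definition frobenius_is (S : pred nat) (F : nat) : Prop :=
  ~~ S F /\ (forall n, F < n -> S n).

Definition dA (A : pred nat) (a : nat) : nat :=
  \big[gcdn/0]_(0 <= x < a.+1 | A x) x.

Definition saturated (S : pred nat) : Prop :=
  numerical_semigroup S /\ (forall s, S s -> 0 < s -> S (s + dA S s)).

Definition Sat (F : nat) (S : pred nat) : Prop :=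
  saturated S /\ frobenius_is S F.

Definition Delta (m : nat) : pred nat := fun x => (x == 0) || (m <= x).

Definition SatSet (F : nat) (X : pred nat) : Prop :=
  (forall x, X x -> ~~ Delta F.+1 x) /\
  exists S, Sat F S /\ (forall x, X x -> S x).

Definition in_SatHull (F : nat) (X : pred nat) (x : nat) : Prop :=
  forall T, Sat F T -> (forall y, X y -> T y) -> T x.

From mathcomp Require Import all_boot zify.
Set Implicit Arguments. Unset Strict Implicit.

(* Since S = Sat(F)[X], it suffices to show that if s were not in
   X, then T := S \ {s} would itself be an element of Sat(F) containing X; as
   S is the least such element we would get s in T, which is absurd.
   Put g := d_S(s-1).  The hypothesis that d_S(s) is a new value of d_S means
   g does not divide s = gcd(g, s) (whenever S has a positive element below s),
   while g divides every element of S below s.  Hence s is neither a sum of two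
   positive elements of S, nor of the form t + d_T(t) with 0 < t < s, which is
   what closure and saturation of T require.  Saturation for t > s follows from
   the fact that a saturated set contains x + L for every multiple L of d_S(x). *)

Lemma dA_rec (A : pred nat) n :
  dA A n.+1 = if A n.+1 then gcdn (dA A n) n.+1 else dA A n.
Proof.
rewrite /dA big_mkcond big_nat_recr //= -big_mkcond.
by case: (A n.+1) => //=; rewrite gcdn0.
Qed.

Lemma dA0 (A : pred nat) : dA A 0 = 0.
Proof. by rewrite /dA big_mkcond big_nat1; case: (A 0). Qed.

Lemma dA_dvd (A : pred nat) n x : A x -> x <= n -> dA A n %| x.
Proof.
elim: n => [|n IHn] Ax; first by rewrite leqn0 => /eqP ->; rewrite dA0.
rewrite leq_eqVlt dA_rec => /orP [/eqP <-|]; first by rewrite Ax dvdn_gcdr.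
rewrite ltnS => /(IHn Ax) dvd_x; case: (A n.+1) => //.
exact: dvdn_trans (dvdn_gcdl _ _) dvd_x.
Qed.

Lemma dvd_dA (A : pred nat) n d :
  (forall x, A x -> x <= n -> d %| x) -> d %| dA A n.
Proof.
elim: n => [|n IHn] dvd_A; first by rewrite dA0 dvdn0.
have dvd_n : d %| dA A n by apply: IHn => x Ax xn; apply: dvd_A => //; apply: leqW.
by rewrite dA_rec; case An: (A n.+1); rewrite ?dvdn_gcd ?dvd_n ?dvd_A.
Qed.

Lemma dA_sub (A B : pred nat) m n :
  (forall x, A x -> B x) -> m <= n -> dA B n %| dA A m.
Proof.
move=> subAB mn; apply: dvd_dA => x Ax xm.
by apply: dA_dvd; [apply: subAB | apply: leq_trans mn].
Qed.

Lemma dA_pos (A : pred nat) n x : A x -> 0 < x -> x <= n -> 0 < dA A n.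
Proof.
move=> Ax x0 xn; have := dA_dvd Ax xn.
by case: (dA A n) => //; rewrite dvd0n => /eqP x_eq0; rewrite x_eq0 in x0.
Qed.

Lemma dA_attained (A : pred nat) n x : A x -> 0 < x -> x <= n ->
  exists2 y, [/\ A y, 0 < y & y <= n] & dA A y = dA A n.
Proof.
elim: n => [|n IHn] Ax x0 xn; first by case: x Ax x0 xn.
case An: (A n.+1); first by exists n.+1.
have xn' : x <= n.
  by move: xn; rewrite leq_eqVlt => /orP [/eqP x_eq|//]; rewrite x_eq An in Ax.
have [y [Ay y0 yn] dAy] := IHn Ax x0 xn'.
by exists y; [split => //; apply: leqW | rewrite dA_rec An].
Qed.

Lemma new_dA_not_dvd (A : pred nat) s t :
  A s -> (forall y, A y -> 0 < y < s -> dA A s <> dA A y) ->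
  A t -> 0 < t < s -> ~~ (dA A s.-1 %| s).
Proof.
move=> As new_s At /andP [t0 ts]; apply/negP => dvd_s.
have s_eq : s = s.-1.+1 by lia.
have ts' : t <= s.-1 by lia.
have [y [Ay y0 ys] dAy] := dA_attained At t0 ts'.
apply: (new_s y Ay); first by lia.
by rewrite dAy s_eq dA_rec -s_eq As; apply/gcdn_idPl.
Qed.

Section SaturatedMultiples.

Variable S : pred nat.
Hypothesis S_sat : forall x, S x -> 0 < x -> S (x + dA S x).

Lemma sat_add_multiple L x : S x -> 0 < x -> dA S x %| L -> S (x + L).
Proof.
elim/ltn_ind: L x => L IHL x Sx x0 dvd_L.
have [->|L0] := posnP L; first by rewrite addn0.
have d0 : 0 < dA S x by apply: dA_pos Sx x0 _.
have dL : dA S x <= L by apply: dvdn_leq.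
have -> : x + L = (x + dA S x) + (L - dA S x) by lia.
apply: IHL; [lia | exact: S_sat | lia |].
have dvd_step : dA S (x + dA S x) %| dA S x by apply: dA_sub; rewrite ?leq_addr.
by apply: dvdn_trans dvd_step _; rewrite dvdn_sub.
Qed.

End SaturatedMultiples.

Section RemoveElement.

Variables (F s : nat) (S : pred nat).
Hypotheses (S_in : Sat F S) (Ss : S s) (s0 : 0 < s) (sF : s < F).
Hypothesis new_s : forall y, S y -> 0 < y < s -> dA S s <> dA S y.

Definition remove_elt : pred nat := [pred x | S x && (x != s)].

Lemma multiple_ne_s t y : S t -> 0 < t < s -> dA S s.-1 %| y -> y != s.
Proof.
move=> St ts dvd_y; apply/eqP => y_eq; rewrite y_eq in dvd_y.
by have /negP := new_dA_not_dvd Ss new_s St ts.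
Qed.

Lemma remove_elt_sub x : remove_elt x -> S x.
Proof. by case/andP. Qed.

(* Closure under addition: s is not a sum of two positive elements of S,
   since both summands would be multiples of d_S(s-1). *)
Lemma remove_elt_add x y : remove_elt x -> remove_elt y -> remove_elt (x + y).
Proof.
have [[[_ S_add _] _] _] := S_in.
move=> /andP [Sx xs] /andP [Sy ys]; rewrite /remove_elt /= S_add //.
have [->|x0] := posnP x; first by rewrite add0n.
have [->|y0] := posnP y; first by rewrite addn0.
apply/negP => /eqP sum_s.
have xs' : 0 < x < s by lia.
have dvd_sum : dA S s.-1 %| x + y by rewrite dvdn_add // dA_dvd //; lia.
by rewrite sum_s in dvd_sum; have /negP := multiple_ne_s Sx xs' dvd_sum.
Qed.

(* Saturation: beyond s use the multiples property of S (d_S(t) divides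
   d_T(t)); below s, t + d_T(t) is a multiple of d_S(s-1), hence not s. *)
Lemma remove_elt_sat t : remove_elt t -> 0 < t -> remove_elt (t + dA remove_elt t).
Proof.
have [[_ S_sat] _] := S_in.
move=> Tt t0; have [St ts] := andP Tt.
apply/andP; split.
  exact: sat_add_multiple S_sat _ _ St t0 (dA_sub remove_elt_sub (leqnn t)).
have [st|ts'] := ltnP s t; first by apply/eqP; lia.
apply: (multiple_ne_s St); first by lia.
apply: dvdn_add; first by apply: dA_dvd St _; lia.
by apply: dA_sub remove_elt_sub _; lia.
Qed.

Lemma remove_elt_Sat : Sat F remove_elt.
Proof.
have [[[S0 _ _] _] [SF S_big]] := S_in.
have remove_elt_big n : F < n -> remove_elt n.
  by move=> Fn; rewrite /remove_elt /= S_big //; apply/eqP; lia.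
split; [split; [split|] | split].
- by rewrite /remove_elt /= S0 eq_sym -lt0n s0.
- exact: remove_elt_add.
- by exists F.+1.
- exact: remove_elt_sat.
- by rewrite /remove_elt /= negb_and SF.
- exact: remove_elt_big.
Qed.

End RemoveElement.

Theorem lemma38 (F : nat) (S : pred nat) (s : nat) (X : pred nat) :
  0 < F -> Sat F S -> S s -> 0 < s < F ->
  (forall s', S s' -> 0 < s' < s -> dA S s <> dA S s') ->
  SatSet F X ->
  (forall x, S x <-> in_SatHull F X x) ->
  X s.
Proof.
move=> _ S_in Ss /andP [s0 sF] new_s _ hull.
apply: contraT => notXs.
have T_in := remove_elt_Sat S_in Ss s0 sF new_s.
have X_sub_T y : X y -> remove_elt s S y.
  move=> Xy; rewrite /remove_elt /= (hull y).2 => [|T _ XT]; last exact: XT.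
  by apply: contraNneq notXs => <-.
have := (hull s).1 Ss _ T_in X_sub_T.
by rewrite /remove_elt /= eqxx andbF.
Qed.
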